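(* For every Turing degree $\boldsymbol{d}$, there exist equivalence relations $E$ and $F$ on $\omega$ such that $E$ is finitarily reducible to $F$ via a computable function, but there is no $\boldsymbol{d}$-computable reduction from $E$ to $F$.
   Context: For equivalence relations $E,F$ on $\omega$, a reduction from $E$ to $F$ is a function $g:\omega\to\omega$ with $x\,E\,y\iff g(x)\,F\,g(y)$ for all $x,y$; it is $\boldsymbol{d}$-computable if computable from a set of degree $\boldsymbol{d}$. $E$ is finitarily reducible to $F$ if there is one total computable function which, given $n\ge1$ and an $n$-tuple $(x_0,\dots,x_{n-1})\in\omega^n$, outputs an $n$-tuple $(y_0,\dots,y_{n-1})$ with $x_i\,E\,x_j\iff y_i\,F\,y_j$ for all $i<j<n$. *)

(* Oracle computability via mu-recursive programs with an
   oracle atom. *)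
From Stdlib Require Import Arith List Relations.
Import ListNotations.

Inductive prog : Type :=
  | PZero : prog
  | PSucc : prog
  | PProj : nat -> prog                (* i-th argument (0 if absent) *)
  | POracle : prog
  | PComp : prog -> list prog -> prog
  | PRec : prog -> prog -> prog
  | PMu : prog -> prog.

Inductive eval (A : nat -> bool) : prog -> list nat -> nat -> Prop :=
  | ev_zero : forall xs, eval A PZero xs 0
  | ev_succ : forall xs, eval A PSucc xs (S (hd 0 xs))
  | ev_proj : forall i xs, eval A (PProj i) xs (nth i xs 0)
  | ev_oracle : forall xs, eval A POracle xs (if A (hd 0 xs) then 1 else 0)
  | ev_comp : forall f gs xs ys z,
      Forall2 (fun g y => eval A g xs y) gs ys ->
      eval A f ys z -> eval A (PComp f gs) xs z
  | ev_rec0 : forall f g xs z,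
      eval A f xs z -> eval A (PRec f g) (0 :: xs) z
  | ev_recS : forall f g n xs r z,
      eval A (PRec f g) (n :: xs) r ->
      eval A g (n :: r :: xs) z ->
      eval A (PRec f g) (S n :: xs) z
  | ev_mu : forall f xs n,
      eval A f (n :: xs) 0 ->
      (forall m, m < n -> exists k, k <> 0 /\ eval A f (m :: xs) k) ->
      eval A (PMu f) xs n.

Definition computable_from (A : nat -> bool) (f : nat -> nat) : Prop :=
  exists p : prog, forall x, eval A p [x] (f x).

Definition computable (f : nat -> nat) : Prop :=
  computable_from (fun _ => false) f.

Definition cpair (x y : nat) : nat := (x + y) * (x + y + 1) / 2 + y.

Fixpoint code (l : list nat) : nat :=
  match l with
  | [] => 0
  | x :: l' => S (cpair x (code l'))
  end.

Definition is_reduction (E F : relation nat) (g : nat -> nat) : Prop :=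
  forall x y, E x y <-> F (g x) (g y).

Definition finitarily_reducible (E F : relation nat) : Prop :=
  exists g : nat -> nat, computable g /\
    forall xs : list nat, 1 <= length xs ->
      exists ys : list nat, g (code xs) = code ys /\ length ys = length xs /\
        forall i j, i < j -> j < length xs ->
          (E (nth i xs 0) (nth j xs 0) <-> F (nth i ys 0) (nth j ys 0)).

From Stdlib Require Import Arith List Relations Lia Classical ClassicalEpsilon FinFun.
Import ListNotations.

(* E is equality and F is equality together with a matching of disjoint pairs,
   each pair joining two different blocks [c * c, c * c + 2 c] (the numbers
   with square root c). Inside a block F is equality, so translating a tuple
   with code c into block c is a computable finitary reduction. The matching
   is built in stages, stage e serving the program with index e: if that
   program computes from D an injective function, two of its values that are
   unused so far and lie in different blocks are matched, so it is no
   reduction. No effectiveness of F is needed, since only D-computable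
   reductions have to be defeated. *)

(** * Tuple codes *)

Fixpoint tri (n : nat) : nat := match n with 0 => 0 | S k => S k + tri k end.

Lemma double_tri n : 2 * tri n = n * (n + 1).
Proof. induction n; simpl; lia. Qed.

Lemma cpair_tri x y : cpair x y = tri (x + y) + y.
Proof.
  unfold cpair. f_equal. rewrite <- double_tri, Nat.mul_comm.
  apply Nat.div_mul. lia.
Qed.

Lemma tri_monotone a b : a <= b -> tri a <= tri b.
Proof. induction 1; simpl; lia. Qed.

Lemma le_tri n : n <= tri n.
Proof. induction n; simpl; lia. Qed.

Lemma cpair_inj x y x' y' : cpair x y = cpair x' y' -> x = x' /\ y = y'.
Proof.
  rewrite !cpair_tri. intro H.
  assert (Hsum : x + y = x' + y').
  { destruct (Nat.lt_trichotomy (x + y) (x' + y')) as [h|[h|h]]; auto.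
    - pose proof (tri_monotone (S (x + y)) (x' + y') h). simpl in *. lia.
    - pose proof (tri_monotone (S (x' + y')) (x + y) h). simpl in *. lia. }
  rewrite Hsum in H. lia.
Qed.

Lemma cpair_surj m : exists x y, cpair x y = m.
Proof.
  assert (exists s, tri s <= m < tri (S s)) as [s Hs].
  { induction m as [|m [s Hs]].
    - exists 0; simpl; lia.
    - destruct (Nat.lt_ge_cases (S m) (tri (S s))).
      + exists s; lia.
      + exists (S s). simpl in *. lia. }
  exists (s - (m - tri s)), (m - tri s). rewrite cpair_tri. simpl in Hs.
  replace (s - (m - tri s) + (m - tri s)) with s by lia. lia.
Qed.

Lemma code_inj l l' : code l = code l' -> l = l'.
Proof.
  revert l'; induction l; destruct l'; simpl; intro H; try discriminate; auto.
  injection H as H. apply cpair_inj in H as [-> H]. f_equal; auto.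
Qed.

Lemma code_surj c : exists l, code l = c.
Proof.
  induction c as [c IH] using lt_wf_ind. destruct c as [|c].
  - exists []; reflexivity.
  - destruct (cpair_surj c) as [x [y Hxy]].
    assert (Hy : y < S c) by (rewrite <- Hxy, cpair_tri; lia).
    destruct (IH y Hy) as [l Hl]. exists (x :: l). simpl. congruence.
Qed.

Lemma code_bound l a : In a l -> a < code l.
Proof.
  induction l as [|b l IH]; simpl; [contradiction|].
  rewrite cpair_tri. pose proof (le_tri (b + code l)).
  intros [<-|Hin]; [|specialize (IH Hin)]; lia.
Qed.

Definition decode (c : nat) : list nat :=
  proj1_sig (constructive_indefinite_description _ (code_surj c)).

Lemma decode_code l : decode (code l) = l.
Proof.
  unfold decode. destruct (constructive_indefinite_description _ _) as [l' H].
  exact (code_inj _ _ H).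
Qed.

Lemma skipn_nth (xs : list nat) k : k < length xs ->
  skipn k xs = nth k xs 0 :: skipn (S k) xs.
Proof. revert k; induction xs; simpl; intros [|k] Hk; try lia; auto. apply IHxs; lia. Qed.

(** * Programs *)

Section Programs.
Variable A : nat -> bool.

Lemma eval_det : forall p xs y, eval A p xs y -> forall y', eval A p xs y' -> y = y'.
Proof.
  fix IH 4. intros p xs y H. destruct H; intros y' H'; inversion H'; subst; auto;
    try (eapply IH; eassumption).
  - assert (ys = ys0).
    { clear H' H0 H6. revert ys0 H3. induction H; intros ys0 H4; inversion H4; subst; auto.
      f_equal. eapply IH; eauto. apply IHForall2; auto. }
    subst. eapply IH; eauto.
  - match goal with
    | H1 : eval A (PRec ?f ?g) (?n :: ?xs) ?r, H2 : eval A (PRec ?f ?g) (?n :: ?xs) ?r0 |- _ =>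
      assert (r = r0) by (eapply IH; eauto); subst r0 end.
    eapply IH; eauto.
  - rename H into Hn, H0 into Hm.
    match goal with H5 : forall m, m < y' -> _ |- _ => rename H5 into Hm' end.
    match goal with H5 : eval A f (y' :: xs) 0 |- _ => rename H5 into Hy end.
    destruct (Nat.lt_trichotomy n y') as [h|[h|h]]; auto.
    + destruct (Hm' _ h) as [k [hk Hk]]. exfalso. apply hk. symmetry. exact (IH _ _ _ Hn _ Hk).
    + destruct (Hm _ h) as [k [hk Hk]]. exfalso. apply hk. exact (IH _ _ _ Hk _ Hy).
Qed.

Lemma eval_comp1 f g xs y z :
  eval A g xs y -> eval A f [y] z -> eval A (PComp f [g]) xs z.
Proof. intros. eapply ev_comp; eauto. Qed.

Lemma eval_comp2 f g1 g2 xs y1 y2 z :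
  eval A g1 xs y1 -> eval A g2 xs y2 -> eval A f [y1; y2] z ->
  eval A (PComp f [g1; g2]) xs z.
Proof. intros. eapply ev_comp; eauto. Qed.

Lemma eval_comp3 f g1 g2 g3 xs y1 y2 y3 z :
  eval A g1 xs y1 -> eval A g2 xs y2 -> eval A g3 xs y3 ->
  eval A f [y1; y2; y3] z -> eval A (PComp f [g1; g2; g3]) xs z.
Proof. intros. eapply ev_comp; eauto. Qed.

Lemma eval_proj i xs y : nth i xs 0 = y -> eval A (PProj i) xs y.
Proof. intros <-; constructor. Qed.

Lemma eval_succ x xs y : y = S x -> eval A PSucc (x :: xs) y.
Proof. intros ->; constructor. Qed.

Lemma eval_rec f g xs (h : nat -> nat) :
  eval A f xs (h 0) -> (forall n, eval A g (n :: h n :: xs) (h (S n))) ->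
  forall n, eval A (PRec f g) (n :: xs) (h n).
Proof. intros Hf Hg n. induction n; econstructor; eauto. Qed.

Ltac ev := repeat match goal with
  | |- eval _ (PComp _ [_]) _ _ => eapply eval_comp1
  | |- eval _ (PComp _ [_; _]) _ _ => eapply eval_comp2
  | |- eval _ (PComp _ [_; _; _]) _ _ => eapply eval_comp3
  | |- eval _ (PProj _) _ _ => eapply eval_proj; cbn [nth]; reflexivity
  | |- eval _ PSucc _ _ => eapply eval_succ; reflexivity
  | |- eval _ PZero _ _ => apply ev_zero
  end.

Definition p_pred := PRec PZero (PProj 0).
Lemma eval_pred n xs : eval A p_pred (n :: xs) (pred n).
Proof. apply (eval_rec _ _ _ pred); intros; ev. Qed.

Definition p_add := PRec (PProj 0) (PComp PSucc [PProj 1]).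
Lemma eval_add n m xs : eval A p_add (n :: m :: xs) (n + m).
Proof. apply (eval_rec _ _ _ (fun n => n + m)); intros; ev. Qed.

Definition p_sub := PRec (PProj 0) (PComp p_pred [PProj 1]).
Lemma eval_sub n m xs z : z = m - n -> eval A p_sub (n :: m :: xs) z.
Proof.
  intros ->. apply (eval_rec _ _ _ (fun n => m - n)); intros.
  - apply eval_proj; simpl; lia.
  - ev. replace (m - S n0) with (pred (m - n0)) by lia. apply eval_pred.
Qed.

Definition p_mul := PRec PZero (PComp p_add [PProj 1; PProj 2]).
Lemma eval_mul n m xs : eval A p_mul (n :: m :: xs) (n * m).
Proof.
  apply (eval_rec _ _ _ (fun n => n * m)); intros; ev.
  replace (S n0 * m) with (n0 * m + m) by lia. apply eval_add.
Qed.

Definition p_tri := PRec PZero (PComp p_add [PComp PSucc [PProj 0]; PProj 1]).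
Lemma eval_tri n xs : eval A p_tri (n :: xs) (tri n).
Proof. apply (eval_rec _ _ _ tri); intros; ev. apply eval_add. Qed.

Definition p_cpair :=
  PComp p_add [PComp p_tri [PComp p_add [PProj 0; PProj 1]]; PProj 1].
Lemma eval_cpair x y xs : eval A p_cpair (x :: y :: xs) (cpair x y).
Proof.
  rewrite cpair_tri. unfold p_cpair. ev; [apply eval_add | apply eval_tri | apply eval_add].
Qed.

Definition p_cons := PComp PSucc [p_cpair].
Lemma eval_cons x l : eval A p_cons [x; code l] (code (x :: l)).
Proof. unfold p_cons. ev. apply eval_cpair. Qed.

(* The diagonal [x + y] of [cpair x y] is the least [s] with [cpair x y < tri (S s)]. *)
Definition p_diag :=
  PMu (PComp p_sub [PComp p_tri [PComp PSucc [PProj 0]]; PComp PSucc [PProj 1]]).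
Lemma eval_diag x y : eval A p_diag [cpair x y] (x + y).
Proof.
  assert (Hstep : forall s z, z = S (cpair x y) - tri (S s) ->
    eval A (PComp p_sub [PComp p_tri [PComp PSucc [PProj 0]]; PComp PSucc [PProj 1]])
      [s; cpair x y] z).
  { intros s z ->. ev; [apply eval_tri | now apply eval_sub]. }
  constructor.
  - apply Hstep. rewrite cpair_tri. simpl. lia.
  - intros m Hm. eexists; split; [|apply Hstep; reflexivity].
    rewrite cpair_tri. pose proof (tri_monotone (S m) (x + y) Hm). lia.
Qed.

Definition p_tail :=
  PComp p_sub [PComp p_tri [PComp p_diag [PComp p_pred [PProj 0]]];
               PComp p_pred [PProj 0]].
Lemma eval_tail x l : eval A p_tail [code (x :: l)] (code l).
Proof.
  unfold p_tail. ev; [apply eval_pred | cbn [code pred]; apply eval_diag |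
                      apply eval_tri | apply eval_pred |].
  apply eval_sub. cbn [code pred]. rewrite cpair_tri. lia.
Qed.

Definition p_head := PComp p_sub [p_tail; PComp p_diag [PComp p_pred [PProj 0]]].
Lemma eval_head x l : eval A p_head [code (x :: l)] x.
Proof.
  unfold p_head. eapply eval_comp2; [apply eval_tail | |].
  - ev; [apply eval_pred | cbn [code pred]; apply eval_diag].
  - apply eval_sub. lia.
Qed.

Definition p_drop := PRec (PProj 0) (PComp p_tail [PProj 1]).
Lemma eval_drop xs k : k <= length xs -> eval A p_drop [k; code xs] (code (skipn k xs)).
Proof.
  induction k as [|k IH]; intros Hk; [apply ev_rec0; ev|].
  eapply ev_recS; [apply IH; lia|]. ev.
  rewrite (skipn_nth xs k) by lia. apply eval_tail.
Qed.

(* The length is the least [k] such that dropping [k] entries leaves the empty code 0. *)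
Definition p_length := PMu p_drop.
Lemma eval_length xs : eval A p_length [code xs] (length xs).
Proof.
  constructor.
  - replace 0 with (code (skipn (length xs) xs)) by (now rewrite skipn_all).
    apply eval_drop; lia.
  - intros m Hm. exists (code (skipn m xs)). split; [|apply eval_drop; lia].
    rewrite skipn_nth by lia. simpl; lia.
Qed.

Section Map.
Variables (ph : prog) (h : nat -> nat -> nat).
Hypothesis eval_ph : forall c x, eval A ph [c; x] (h c x).

(* Primitive recursion over [k] with arguments [acc; length xs; code xs]: the
   [k]-th step conses the image of the entry of index [length xs - S k] onto [acc]. *)
Definition p_map_suffix :=
  PRec PZero
    (PComp p_cons
       [PComp ph [PProj 3; PComp p_head
                             [PComp p_drop [PComp p_sub [PComp PSucc [PProj 0]; PProj 2];
                                            PProj 3]]];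
        PProj 1]).

Lemma eval_map_suffix xs k : k <= length xs ->
  eval A p_map_suffix [k; length xs; code xs]
    (code (map (h (code xs)) (skipn (length xs - k) xs))).
Proof.
  induction k as [|k IH]; intros Hk.
  - apply ev_rec0. rewrite Nat.sub_0_r, skipn_all. ev.
  - eapply ev_recS; [apply IH; lia|].
    assert (Hsplit : skipn (length xs - S k) xs =
                     nth (length xs - S k) xs 0 :: skipn (length xs - k) xs).
    { rewrite skipn_nth by lia. do 3 f_equal. lia. }
    rewrite Hsplit. ev; [| | | apply eval_ph | apply eval_cons].
    + now apply eval_sub.
    + apply eval_drop. lia.
    + rewrite Hsplit. apply eval_head.
Qed.

Definition p_map := PComp p_map_suffix [p_length; p_length; PProj 0].

Lemma eval_map xs : eval A p_map [code xs] (code (map (h (code xs)) xs)).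
Proof.
  unfold p_map. ev; [apply eval_length | apply eval_length |].
  pose proof (eval_map_suffix xs (length xs) (le_n _)) as H.
  now rewrite Nat.sub_diag in H.
Qed.
End Map.

Definition p_square_add := PComp p_add [PComp p_mul [PProj 0; PProj 0]; PProj 1].
Lemma eval_square_add c x : eval A p_square_add [c; x] (c * c + x).
Proof. unfold p_square_add. ev; [apply eval_mul | apply eval_add]. Qed.
End Programs.

Lemma sqrt_square_add c x : x <= 2 * c -> Nat.sqrt (c * c + x) = c.
Proof. intro Hx. apply Nat.sqrt_unique. nia. Qed.

(* A tuple with code [c] has entries below [c], and [x |-> c * c + x] sends
   them injectively into the single block [c]. *)
Lemma eq_finitarily_reducible (F : relation nat) :
  reflexive nat F -> (forall u v, Nat.sqrt u = Nat.sqrt v -> F u v -> u = v) ->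
  finitarily_reducible eq F.
Proof.
  intros Hrefl Hblock.
  exists (fun c => code (map (fun x => c * c + x) (decode c))). split.
  - exists (p_map p_square_add). intro c. destruct (code_surj c) as [xs <-].
    rewrite decode_code. apply (eval_map _ _ (fun c x => c * c + x)), eval_square_add.
  - intros xs _. set (c := code xs). exists (map (fun x => c * c + x) xs).
    unfold c. rewrite decode_code, length_map. fold c. do 2 (split; [reflexivity|]).
    intros i j Hij Hj.
    assert (Hlt : forall k, k < length xs -> nth k xs 0 < c)
      by (intros k Hk; apply code_bound, nth_In, Hk).
    assert (Hnth : forall k, k < length xs ->
                   nth k (map (fun x => c * c + x) xs) 0 = c * c + nth k xs 0).
    { intros k Hk. rewrite (nth_indep _ _ (c * c + 0)) by (rewrite length_map; lia).
      apply map_nth. }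
    rewrite !Hnth by lia. split; [intros ->; apply Hrefl|].
    intro HF. apply Hblock in HF; [lia|].
    rewrite !sqrt_square_add; [reflexivity| |]; [specialize (Hlt j) | specialize (Hlt i)]; lia.
Qed.

(** * Diagonalization *)

Fixpoint enc (p : prog) : nat :=
  match p with
  | PZero => code [0]
  | PSucc => code [1]
  | PProj i => code [2; i]
  | POracle => code [3]
  | PComp f gs => code (4 :: enc f :: map enc gs)
  | PRec f g => code [5; enc f; enc g]
  | PMu f => code [6; enc f]
  end.

Lemma enc_inj : forall p q, enc p = enc q -> p = q.
Proof.
  fix IH 1.
  intros [| | i | | f gs | f g | f] [| | i' | | f' gs' | f' g' | f'] H;
    apply code_inj in H; try discriminate; try (injection H; intros; subst); try reflexivity.
  - f_equal; [now apply IH|]. clear f f' H H1.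
    revert gs' H0; induction gs as [|a gs IHgs]; intros [|a' gs'] Hgs;
      try discriminate; try reflexivity.
    injection Hgs as Ha Hgs. f_equal; [now apply IH | now apply IHgs].
  - f_equal; now apply IH.
  - f_equal; now apply IH.
Qed.

Lemma eq_or_partner_equivalence {T : Type} (Q : relation T) :
  symmetric T Q -> (forall u v w, Q u v -> Q u w -> v = w) ->
  equivalence T (fun u v => u = v \/ Q u v).
Proof.
  intros Hsym Hfun. constructor.
  - now left.
  - intros u v w [<-|Huv] [<-|Hvw]; auto. left. exact (Hfun v u w (Hsym u v Huv) Hvw).
  - intros u v [<-|Huv]; auto.
Qed.

Definition used (M : list (nat * nat)) : list nat := flat_map (fun uv => [fst uv; snd uv]) M.

Lemma used_cons u v M : used ((u, v) :: M) = u :: v :: used M.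
Proof. reflexivity. Qed.

Definition paired (M : list (nat * nat)) (u v : nat) : Prop := In (u, v) M \/ In (v, u) M.

Lemma paired_used M u v : paired M u v -> In u (used M).
Proof.
  intros [H|H]; apply in_flat_map; eexists; split; [exact H| |exact H|]; simpl; auto.
Qed.

Lemma paired_functional M u v w : NoDup (used M) -> paired M u v -> paired M u w -> v = w.
Proof.
  induction M as [|[a b] M IH]; [intros _ [[]|[]]|].
  intros Hnd Hv Hw. inversion Hnd as [|? ? Ha Hnd']; subst.
  inversion Hnd' as [|? ? Hb Hnd'']; subst.
  assert (Hcons : forall x, paired ((a, b) :: M) u x ->
                  (u = a /\ x = b) \/ (u = b /\ x = a) \/ paired M u x).
  { intros x [[Hx|Hx]|[Hx|Hx]];
    [injection Hx as <- <- | | injection Hx as <- <- |]; unfold paired; auto. }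
  destruct (Hcons v Hv) as [[-> ->]|[[-> ->]|Pv]], (Hcons w Hw) as [[? ->]|[[? ->]|Pw]];
    subst; auto; exfalso;
    solve [ apply Ha; simpl; auto | apply Ha; right; eapply paired_used; eauto
          | apply Hb; eapply paired_used; eauto ].
Qed.

Lemma injective_unbounded (g : nat -> nat) :
  (forall x y, g x = g y -> x = y) -> forall N, exists x, N <= g x.
Proof.
  intros Hg N. apply NNPP. intro Hn.
  assert (Hbound : forall x, g x < N) by (intro x; apply Nat.nle_gt; eauto).
  assert (Hnd : NoDup (map g (seq 0 (S N)))).
  { apply Injective_map_NoDup; [intros x y; apply Hg | apply seq_NoDup]. }
  assert (Hincl : incl (map g (seq 0 (S N))) (seq 0 N)).
  { intros z Hz. apply in_map_iff in Hz as [x [<- _]]. apply in_seq.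
    specialize (Hbound x). lia. }
  pose proof (NoDup_incl_length Hnd Hincl). rewrite length_map, !length_seq in *. lia.
Qed.

(* The second value is taken beyond the square of the next block, so the
   blocks differ. *)
Lemma fresh_values_in_distinct_blocks (g : nat -> nat) (L : list nat) :
  (forall x y, g x = g y -> x = y) ->
  exists x y, x <> y /\ ~ In (g x) L /\ ~ In (g y) L /\ Nat.sqrt (g x) <> Nat.sqrt (g y).
Proof.
  intros Hg.
  assert (Hfresh : forall u, S (list_max L) <= u -> ~ In u L).
  { intros u Hu Hin. pose proof (proj1 (list_max_le L (list_max L)) (le_n _)) as HL.
    rewrite Forall_forall in HL. specialize (HL u Hin). lia. }
  destruct (injective_unbounded g Hg (S (list_max L))) as [x Hx].
  set (r := S (Nat.sqrt (g x))).
  destruct (injective_unbounded g Hg (max (S (list_max L)) (r * r))) as [y Hy].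
  assert (Hblock : r <= Nat.sqrt (g y)).
  { rewrite <- (Nat.sqrt_square r). apply Nat.sqrt_le_mono. lia. }
  assert (Hsqrt : Nat.sqrt (g x) <> Nat.sqrt (g y)) by lia.
  exists x, y. split; [intros ->; auto|].
  split; [apply Hfresh; lia|]. split; [apply Hfresh; lia | exact Hsqrt].
Qed.

Section Construction.
Variable D : nat -> bool.

Definition candidate (M : list (nat * nat)) (e u v : nat) : Prop :=
  exists p x y, enc p = e /\ x <> y /\ eval D p [x] u /\ eval D p [y] v /\
    ~ In u (used M) /\ ~ In v (used M) /\ Nat.sqrt u <> Nat.sqrt v.

Definition extend (M : list (nat * nat)) (e : nat) : list (nat * nat) :=
  match excluded_middle_informative (exists uv : nat * nat, candidate M e (fst uv) (snd uv)) with
  | left H => proj1_sig (constructive_indefinite_description _ H) :: M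
  | right _ => M
  end.

Lemma extend_spec M e :
  (extend M e = M /\ ~ exists u v, candidate M e u v) \/
  exists u v, candidate M e u v /\ extend M e = (u, v) :: M.
Proof.
  unfold extend. destruct excluded_middle_informative as [H|H].
  - right. destruct (constructive_indefinite_description _ H) as [[u v] Huv].
    now exists u, v.
  - left. split; [reflexivity|]. intros [u [v Huv]]. apply H. now exists (u, v).
Qed.

Fixpoint stage (n : nat) : list (nat * nat) :=
  match n with 0 => [] | S n => extend (stage n) n end.

Lemma stage_incl n m : n <= m -> incl (stage n) (stage m).
Proof.
  induction 1 as [|m _ IH]; [apply incl_refl|]. simpl.
  destruct (extend_spec (stage m) m) as [[-> _]|[u [v [_ ->]]]]; auto using incl_tl.
Qed.

Lemma stage_valid n :
  NoDup (used (stage n)) /\ forall u v, In (u, v) (stage n) -> Nat.sqrt u <> Nat.sqrt v.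
Proof.
  induction n as [|n [Hnd Hblocks]]; simpl; [split; [constructor | contradiction]|].
  destruct (extend_spec (stage n) n) as [[-> _]|[u [v [Hc ->]]]]; [auto|].
  destruct Hc as [p [x [y [_ [_ [_ [_ [Hu [Hv Huv]]]]]]]]].
  rewrite used_cons. split.
  - constructor; [|constructor; auto]. intros [<-|]; auto.
  - intros a b [Hab|Hab]; [injection Hab as <- <-|]; auto.
Qed.

Definition matched (u v : nat) : Prop := exists n, paired (stage n) u v.

Lemma matched_stage u v : matched u v -> forall m, exists n, m <= n /\ paired (stage n) u v.
Proof.
  intros [n Hn] m. exists (max n m). split; [lia|].
  destruct Hn; [left | right]; apply (stage_incl n); auto; lia.
Qed.

Lemma matched_functional u v w : matched u v -> matched u w -> v = w.
Proof.
  intros Hv Hw. destruct (matched_stage u v Hv 0) as [n [_ Pv]].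
  destruct (matched_stage u w Hw n) as [m [Hnm Pw]].
  apply (paired_functional (stage m) u); [apply stage_valid | | exact Pw].
  destruct Pv; [left | right]; eapply stage_incl; eauto.
Qed.

Lemma matched_distinct_blocks u v : matched u v -> Nat.sqrt u <> Nat.sqrt v.
Proof.
  intros [n [H|H]]; apply stage_valid in H; auto.
Qed.

Definition diag_rel (u v : nat) : Prop := u = v \/ matched u v.

Lemma diag_rel_equivalence : equivalence nat diag_rel.
Proof.
  apply eq_or_partner_equivalence; [|exact matched_functional].
  intros u v [n [H|H]]; exists n; red; auto.
Qed.

Lemma diag_rel_same_block u v : Nat.sqrt u = Nat.sqrt v -> diag_rel u v -> u = v.
Proof. intros Hb [Huv|Huv]; [exact Huv | now apply matched_distinct_blocks in Huv]. Qed.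

Lemma no_diag_reduction :
  ~ exists g, computable_from D g /\ is_reduction eq diag_rel g.
Proof.
  intros [g [[p Hp] Hred]].
  assert (Hinj : forall x y, g x = g y -> x = y) by (intros x y H; apply Hred; left; exact H).
  set (e := enc p).
  destruct (fresh_values_in_distinct_blocks g (used (stage e)) Hinj)
    as [x [y [Hxy [Hx [Hy Hb]]]]].
  destruct (extend_spec (stage e) e) as [[_ Hnone]|[u [v [Hc Hext]]]].
  { apply Hnone. exists (g x), (g y), p, x, y. auto 7. }
  destruct Hc as [p' [x' [y' [Hp' [Hxy' [Hu [Hv _]]]]]]].
  apply enc_inj in Hp'; subst p'.
  rewrite (eval_det D p [x'] u Hu (g x') (Hp x')) in Hext.
  rewrite (eval_det D p [y'] v Hv (g y') (Hp y')) in Hext.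
  apply Hxy', Hred. right. exists (S e). left.
  change (stage (S e)) with (extend (stage e) e). rewrite Hext. now left.
Qed.
End Construction.

Theorem corollary3p8 :
  forall D : nat -> bool,
    exists E F : relation nat,
      equivalence nat E /\ equivalence nat F /\
      finitarily_reducible E F /\
      ~ (exists g : nat -> nat, computable_from D g /\ is_reduction E F g).
Proof.
  intro D. exists eq, (diag_rel D).
  assert (Hequiv : equivalence nat (diag_rel D)) by apply diag_rel_equivalence.
  split; [|split; [exact Hequiv | split]].
  - constructor; red; congruence.
  - apply eq_finitarily_reducible; [apply Hequiv | apply diag_rel_same_block].
  - apply no_diag_reduction.
Qed.
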